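(* Let $(X,d_X,\mu_X)$ be a compact metric measure space whose measure $\mu_X$ is strictly positive. Then the distance kernel embedding $\Phi:X\to\mathbb{C}^\infty$ is injective.
   Context: A metric measure space carries a Radon Borel measure; it is strictly positive if every nonempty open set has positive measure. The distance kernel operator $(D^Xf)(x)=\int_X f(y)d_X(x,y)\,d\mu_X(y)$ on $L^2(X,\mu_X)$ is compact self-adjoint; let $\phi_i$ be an orthonormal basis of real eigenfunctions with eigenvalues $\lambda_i$ ordered by decreasing absolute value (non-zero eigenvalues of multiplicity one, signs fixed by a convention). Set $\alpha_i=\sqrt{\lambda_i}\phi_i$ (square root with positive imaginary part if $\lambda_i<0$; eigenfunctions in the zero eigenspace replaced by the zero function). $\Phi(x)=(\alpha_1(x),\alpha_2(x),\dots)\in\mathbb{C}^\infty$. *)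

From HB Require Import structures.
From mathcomp Require Import all_boot all_order all_algebra.
From mathcomp Require Import all_classical all_reals all_analysis.
From mathcomp Require Import complex.
Set Implicit Arguments. Unset Strict Implicit. Unset Printing Implicit Defensive.
Import Order.TTheory GRing.Theory Num.Theory.
Import numFieldNormedType.Exports.
Local Open Scope classical_set_scope.
Local Open Scope ring_scope.

Section MetricDefs.
Context {R : realType} {X : Type}.
Variable dist : X -> X -> R.

Definition is_metric :=
  [/\ forall x y, 0 <= dist x y,
      forall x y, dist x y = 0 <-> x = y,
      forall x y, dist x y = dist y x &
      forall x y z, dist x z <= dist x y + dist y z].

Definition dball (x : X) (r : R) : set X := [set y | dist x y < r].

Definition dopen (A : set X) : Prop :=
  forall x, A x -> exists2 r : R, 0 < r & dball x r `<=` A.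

(** compactness of the metric space (sequential compactness, which is
    equivalent to compactness for metric spaces) *)
Definition dcompact : Prop :=
  forall u : nat -> X, exists (phi : nat -> nat) (x : X),
    (forall n, (phi n < phi n.+1)%N) /\
    (fun n => dist (u (phi n)) x) @ \oo --> (0 : R).
End MetricDefs.

Definition dist_kernel_op {R : realType} (dm : measure_display)
  (X : measurableType dm) (mu : {measure set X -> \bar R})
  (dist : X -> X -> R) (f : X -> R) (x : X) : \bar R :=
  (\int[mu]_y (f y * dist x y)%:E)%E.

Definition csqrt_real {R : rcfType} (l : R) : R[i] :=
  if 0 <= l then ((Num.sqrt l)%:C)%C else 'i%C * ((Num.sqrt (- l))%:C)%C.

(** The embedding Phi(x) = (alpha_1(x), alpha_2(x), ...), alpha_i = sqrt(lambda_i) phi_i,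
    with the indices outside the (initial segment) index set I padded by 0. *)
Definition dk_embedding {R : rcfType} {X : Type} (I : set nat)
  (lam : nat -> R) (phi : nat -> X -> R) (x : X) : nat -> R[i] :=
  fun i => if `[< I i >] then csqrt_real (lam i) * ((phi i x)%:C)%C else 0.

From HB Require Import structures.
From mathcomp Require Import all_boot all_order all_algebra.
From mathcomp Require Import all_classical all_reals all_analysis.
From mathcomp Require Import complex.
From mathcomp Require Import measurable_realfun.
From mathcomp Require Import lra.
Import Order.TTheory GRing.Theory Num.Theory.
Import numFieldNormedType.Exports.
Local Open Scope classical_set_scope.
Local Open Scope ring_scope.

(* If Phi x = Phi x', then f := d(x, .) - d(x', .) is orthogonal to every phi_i,
   since <f, phi_i> = (D phi_i)(x) - (D phi_i)(x').  For lambda_i <> 0 this vanishes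
   because (D phi_i)(z) = lambda_i phi_i(z) and the i-th coordinate of Phi determines
   phi_i(z).  For lambda_i = 0, D phi_i is Lipschitz (with constant ||phi_i||_1) and
   vanishes almost everywhere, hence everywhere because mu charges every ball.
   Completeness then gives f = 0 a.e., so f = 0 everywhere by the same argument, and
   f(x) = -d(x', x). *)

Section Metric.
Context {R : realType} {X : Type}.
Variable dist : X -> X -> R.
Hypothesis dist_metric : is_metric dist.

Lemma dball_open x r : dopen dist (dball dist x r).
Proof.
have [_ _ _ dtri] := dist_metric.
move=> y; rewrite /dball /= => xy; exists (r - dist x y); first by rewrite subr_gt0.
move=> z; rewrite /dball /= => yz; apply: le_lt_trans (dtri x y z) _; lra.
Qed.

Lemma dball_center x {r} : 0 < r -> dball dist x r x.
Proof. by have [_ d0P _ _] := dist_metric; rewrite /dball /= (proj2 (d0P x x)). Qed.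

Lemma dist_lipschitz z w y : `|dist z y - dist w y| <= dist z w.
Proof.
have [_ _ dsym dtri] := dist_metric; rewrite ler_norml.
have := dtri z w y; have := dtri w z y; rewrite (dsym w z); lra.
Qed.

Lemma dist_bounded : dcompact dist -> forall z, exists M, forall y, dist z y <= M.
Proof.
have [d_ge0 _ dsym dtri] := dist_metric.
move=> dist_compact z; apply/not_existsP => unbounded.
have /choice [u u_far] : forall n : nat, exists y, n%:R < dist z y.
  by move=> n; have /existsNP [y /negP] := unbounded n%:R; rewrite -ltNge; exists y.
have [phi [x [phi_incr u_cvg]]] := dist_compact u.
have phi_ge n : (n <= phi n)%N.
  by elim: n => [//|n IH]; exact: leq_ltn_trans IH (phi_incr n).
have [N _ u_near] := proj1 (cvgr0Pnorm_lt _) u_cvg 1 ltr01.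
pose n := maxn N (Num.truncn (dist z x + 1)).+1.
have := u_near n (leq_maxl _ _); rewrite /= ger0_norm ?d_ge0 // dsym.
have : dist z x + 1 < n%:R.
  by apply: lt_le_trans (truncnS_gt _) _; rewrite ler_nat leq_maxr.
have : n%:R <= (phi n)%:R :> R by rewrite ler_nat.
have := u_far (phi n); have := dtri z x (u (phi n)); lra.
Qed.

Definition dcontinuous (g : X -> R) :=
  forall x e, 0 < e -> exists2 r, 0 < r & forall y, dist x y < r -> `|g x - g y| < e.

Lemma lipschitz_dcontinuous (g : X -> R) C : 0 <= C ->
  (forall z w, `|g z - g w| <= C * dist z w) -> dcontinuous g.
Proof.
move=> C_ge0 g_lip x e e_gt0; exists (e / (C + 1)); first by rewrite divr_gt0 ?ltr_wpDl.
move=> y xy; apply: le_lt_trans (g_lip x y) _.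
apply: le_lt_trans (ler_wpM2l C_ge0 (ltW xy)) _.
rewrite mulrA ltr_pdivrMr ?ltr_wpDl // mulrC ltr_pM2l //; lra.
Qed.

Lemma dcontinuous_distB x x' : dcontinuous (fun y => dist x y - dist x' y).
Proof.
have [_ _ dsym _] := dist_metric.
apply: (lipschitz_dcontinuous _ 2) => // z w.
have := dist_lipschitz z w x; have := dist_lipschitz z w x'.
rewrite (dsym x z) (dsym x w) (dsym x' z) (dsym x' w) !ler_norml; lra.
Qed.

End Metric.
Arguments dball_open {R X dist}.
Arguments dball_center {R X dist} _ _ {r}.
Arguments dist_lipschitz {R X dist}.
Arguments dist_bounded {R X dist}.
Arguments lipschitz_dcontinuous {R X dist g} C.
Arguments dcontinuous_distB {R X dist}.

Section BorelMeasure.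
Context {R : realType} {dm : measure_display} {X : measurableType dm}.
Variable dist : X -> X -> R.
Hypothesis dist_metric : is_metric dist.
Hypothesis measurable_borel : (@measurable _ X) = <<s [set A | dopen dist A] >>.

Lemma dopen_measurable {A} : dopen dist A -> measurable A.
Proof. by move=> A_open; rewrite measurable_borel; apply: sub_sigma_algebra. Qed.

Lemma measurable_dist z : measurable_fun setT (dist z).
Proof.
have [_ _ dsym dtri] := dist_metric.
apply: (measurability _ (RGenOInfty.measurableE R)).
move=> _ [_ [a ->] <-]; rewrite setTI.
apply: dopen_measurable => y; rewrite /= in_itv /= andbT => ay.
exists (dist z y - a); first by rewrite subr_gt0.
move=> w; rewrite /dball /= in_itv /= andbT => yw.
have := dtri z w y; rewrite (dsym w y); lra.
Qed.

Variable mu : {measure set X -> \bar R}.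
Hypothesis mu_pos : forall A : set X, dopen dist A -> A !=set0 -> (0 < mu A)%E.

Lemma dcontinuous_ae_eq0 (g : X -> R) : dcontinuous dist g ->
  {ae mu, forall x, g x = 0} -> forall x, g x = 0.
Proof.
move=> g_cont [N [mN muN0 gN]] x; apply/eqP; apply: contraT => gx_neq0.
have [r r_gt0 g_near] : exists2 r, 0 < r & forall y, dist x y < r -> `|g x - g y| < `|g x|.
  by apply: g_cont; rewrite normr_gt0.
have ball_N : dball dist x r `<=` N.
  move=> y /g_near xy; apply: gN => /= gy0.
  by move: xy; rewrite gy0 subr0 ltxx.
have ball_open := dball_open dist_metric x r.
have := mu_pos _ ball_open (ex_intro _ x (dball_center dist_metric x r_gt0)).
have mball := dopen_measurable ball_open.
move=> /lt_le_trans /(_ (le_measure mu (mem_set mball) (mem_set mN) ball_N)).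
by move: muN0 => /= ->; rewrite ltxx.
Qed.

End BorelMeasure.
Arguments dopen_measurable {R dm X dist} _ {A}.
Arguments measurable_dist {R dm X dist}.
Arguments dcontinuous_ae_eq0 {R dm X dist} _ _ {mu} _ {g}.

Section FiniteMeasure.
Context {R : realType} {dm : measure_display} {X : measurableType dm}.
Variable mu : {finite_measure set X -> \bar R}.

Lemma integrable_of_sqr (f : X -> R) : measurable_fun setT f ->
  (\int[mu]_x (f x * f x)%:E < +oo)%E -> mu.-integrable setT (EFin \o f).
Proof.
move=> mf sqr_lty; apply/integrableP; split; first exact/measurable_EFinP.
have msqr : measurable_fun setT (fun x => (f x * f x)%:E).
  by apply/measurable_EFinP; exact: measurable_funM.
have sqr_ge0 x : 0 <= f x * f x by rewrite -expr2 sqr_ge0.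
apply: (@le_lt_trans _ _ (\int[mu]_x (1%:E + (f x * f x)%:E))%E).
  apply: ge0_le_integral => //.
  - by apply/measurableT_comp => //; exact/measurable_EFinP.
  - exact: emeasurable_funD.
  - move=> x _; rewrite /= lee_fin -(ger0_norm (sqr_ge0 x)) normrM.
    by have := normr_ge0 (f x); nra.
rewrite ge0_integralD //; last by move=> x _; rewrite lee_fin.
by rewrite lte_add_pinfty // integral_cst // mul1e; exact: fin_num_fun_lty.
Qed.

Lemma bounded_sqr_integral_lty {f : X -> R} {M : R} : measurable_fun setT f ->
  (forall x, `|f x| <= M) -> (\int[mu]_x (f x ^+ 2)%:E < +oo)%E.
Proof.
move=> mf f_le; apply: (@le_lt_trans _ _ (\int[mu]_x (M ^+ 2)%:E)%E).
  apply: ge0_le_integral => //.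
  - by move=> x _; rewrite lee_fin sqr_ge0.
  - by apply/measurable_EFinP; exact: measurable_funX.
  - by move=> x _; rewrite lee_fin; move: (f_le x); rewrite ler_norml; nra.
by rewrite integral_cst // lte_mul_pinfty // ?lee_fin ?sqr_ge0 // fin_num_fun_lty.
Qed.

End FiniteMeasure.

Section DistanceKernel.
Context {R : realType} {dm : measure_display} {X : measurableType dm}.
Variable dist : X -> X -> R.
Hypothesis dist_metric : is_metric dist.
Hypothesis dist_compact : dcompact dist.
Hypothesis measurable_borel : (@measurable _ X) = <<s [set A | dopen dist A] >>.
Variable mu : {finite_measure set X -> \bar R}.
Variable psi : X -> R.
Hypothesis psi_int : mu.-integrable setT (EFin \o psi).

Let D := dist_kernel_op mu dist psi.

Lemma integrable_dist_kernel z : mu.-integrable setT (fun y => (psi y * dist z y)%:E).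
Proof.
have [d_ge0 _ _ _] := dist_metric.
have [M dist_le] := dist_bounded dist_metric dist_compact z.
have -> : (fun y => (psi y * dist z y)%:E) = ((EFin \o psi) \* (EFin \o dist z))%E.
  by apply/funext => y; rewrite /= EFinM.
apply: integrableMl => //; first exact: measurable_dist.
exists M; split; first exact: num_real.
by move=> M' M_lt y _; rewrite /= ger0_norm // (le_trans (dist_le y)) ?ltW.
Qed.

Lemma dist_kernel_op_fin_num z : D z \is a fin_num.
Proof. exact: integrable_fin_num (integrable_dist_kernel z). Qed.

Lemma integral_mul_distB x x' :
  (\int[mu]_y (psi y * (dist x y - dist x' y))%:E = D x - D x')%E.
Proof.
rewrite /D /dist_kernel_op -integralB_EFin //; try exact: integrable_dist_kernel.
by apply: eq_integral => y _; rewrite mulrBr.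
Qed.

Lemma dist_kernel_op_lipschitz z w :
  `|fine (D z) - fine (D w)| <= (\int[mu]_y `|psi y|) * dist z w.
Proof.
have [d_ge0 _ _ _] := dist_metric.
have mpsi : measurable_fun setT psi by case/integrableP: psi_int => /measurable_EFinP.
have abs_fin : (\int[mu]_y `|psi y|%:E)%E \is a fin_num.
  case/integrableP: psi_int => _ h.
  by rewrite ge0_fin_numE //; exact: integral_ge0.
rewrite -lee_fin EFinM /Rintegral fineK // -abse_EFin EFinB !fineK ?dist_kernel_op_fin_num //.
rewrite -integral_mul_distB.
have mdistB : measurable_fun setT (fun y => dist z y - dist w y).
  by apply: measurable_funB; exact: measurable_dist.
apply: le_trans (le_abse_integral _ _ _) _ => //.
  by apply/measurable_EFinP; exact: measurable_funM.
rewrite -ge0_integralZr //; last by rewrite lee_fin.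
- apply: ge0_le_integral => //.
  + by apply/measurableT_comp => //; apply/measurable_EFinP; exact: measurable_funM.
  + apply/measurable_EFinP; apply: measurable_funM => //.
    exact: measurableT_comp.
  + move=> y _; rewrite /= -EFinM lee_fin normrM ler_wpM2l //.
    exact: dist_lipschitz.
- by apply/measurable_EFinP; exact: measurableT_comp.
Qed.

Hypothesis mu_pos : forall A : set X, dopen dist A -> A !=set0 -> (0 < mu A)%E.

Lemma dist_kernel_op_ae_eq0 : {ae mu, forall x, D x = 0%E} -> forall x, D x = 0%E.
Proof.
move=> D_ae0 x; rewrite -[D x]fineK ?dist_kernel_op_fin_num //; congr EFin.
apply: (dcontinuous_ae_eq0 dist_metric measurable_borel mu_pos (g := fine \o D)).
  by apply: lipschitz_dcontinuous dist_kernel_op_lipschitz; exact: Rintegral_ge0.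
by apply: filterS D_ae0 => y /= ->.
Qed.

End DistanceKernel.

Lemma csqrt_real_eq0 (R : rcfType) (l : R) : (csqrt_real l == 0) = (l == 0).
Proof.
rewrite /csqrt_real; case: ifPn => [l_ge0|l_lt0].
  by rewrite fmorph_eq0 sqrtr_eq0 eq_le l_ge0 andbT.
rewrite mulf_eq0 fmorph_eq0 sqrtr_eq0 oppr_le0 (negbTE l_lt0) orbF.
rewrite complexiE (negbTE (neq0Ci _)); apply/esym/negbTE.
by apply: contraNneq l_lt0 => ->.
Qed.

Lemma dk_embedding_coord_eq {R : rcfType} {X : Type} {I : set nat} {lam : nat -> R}
    {phi : nat -> X -> R} {x x' : X} {i} :
  dk_embedding I lam phi x = dk_embedding I lam phi x' -> I i -> lam i != 0 ->
  phi i x = phi i x'.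
Proof.
move=> /(congr1 (fun a => a i)) + Ii; rewrite /dk_embedding asboolT //.
by rewrite -csqrt_real_eq0 => + lam_neq0 => /(mulfI lam_neq0) [].
Qed.

Theorem lemma3p6 (R : realType) (dm : measure_display) (X : measurableType dm)
  (dist : X -> X -> R)
  (* (X, dist) is a compact metric space, measurable sets = Borel sets *)
  (Hmetric : is_metric dist)
  (Hcompact : dcompact dist)
  (Hborel : (@measurable _ X) = <<s [set A | dopen dist A] >>)
  (* a finite (hence Radon, X being compact metric) Borel measure *)
  (mu : {finite_measure set X -> \bar R})
  (* strictly positive *)
  (Hpos : forall A : set X, dopen dist A -> A !=set0 -> (0 < mu A)%E)
  (* orthonormal basis (phi_i)_{i in I} of real eigenfunctions of D^X *)
  (I : set nat) (HI : forall i j, I j -> (i <= j)%N -> I i)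
  (lam : nat -> R) (phi : nat -> X -> R)
  (Hmeas : forall i, I i -> measurable_fun setT (phi i))
  (Horth : forall i j, I i -> I j ->
     (\int[mu]_x (phi i x * phi j x)%:E)%E = (if i == j then 1 else 0)%:E)
  (Hcomplete : forall f : X -> R, measurable_fun setT f ->
     (\int[mu]_x (f x ^+ 2)%:E < +oo)%E ->
     (forall i, I i -> (\int[mu]_x (f x * phi i x)%:E)%E = 0%E) ->
     {ae mu, forall x, f x = 0})
  (Heigen : forall i, I i ->
     {ae mu, forall x, dist_kernel_op mu dist (phi i) x = (lam i * phi i x)%:E})
  (* pointwise representative: phi_i = (D^X phi_i) / lambda_i for lambda_i <> 0 *)
  (Hrepr : forall i, I i -> lam i != 0 -> forall x,
     (dist_kernel_op mu dist (phi i) x = (lam i * phi i x)%:E))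
  (* eigenvalues ordered by decreasing absolute value *)
  (Hord : forall i j, I i -> I j -> (i <= j)%N -> `|lam j| <= `|lam i|)
  (* non-zero eigenvalues have multiplicity one *)
  (Hmult : forall i j, I i -> I j -> i != j -> lam i != 0 -> lam i != lam j) :
  injective (dk_embedding I lam phi).
Proof.
move=> x x' Phi_eq.
pose f y := dist x y - dist x' y.
have mf : measurable_fun setT f by apply: measurable_funB; exact: measurable_dist.
have phi_int i : I i -> mu.-integrable setT (EFin \o phi i).
  by move=> Ii; apply: integrable_of_sqr (Hmeas i Ii) _; rewrite Horth // eqxx ltry.
have kernel_eq i : I i ->
    dist_kernel_op mu dist (phi i) x = dist_kernel_op mu dist (phi i) x'.
  move=> Ii; have [lam0|lam_neq0] := eqVneq (lam i) 0; last first.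
    by rewrite !Hrepr // (dk_embedding_coord_eq Phi_eq Ii).
  suff D0 : forall z, dist_kernel_op mu dist (phi i) z = 0%E by rewrite !D0.
  apply: dist_kernel_op_ae_eq0 Hpos _ => //; first exact: phi_int.
  by apply: filterS (Heigen i Ii) => y ->; rewrite lam0 mul0r.
have f_orth i : I i -> (\int[mu]_y (f y * phi i y)%:E = 0)%E.
  move=> Ii; under eq_integral do rewrite mulrC.
  rewrite integral_mul_distB ?kernel_eq ?subee ?dist_kernel_op_fin_num //; exact: phi_int.
have f_sqr_lty := bounded_sqr_integral_lty mu mf (dist_lipschitz Hmetric x x').
have f_ae0 := Hcomplete f mf f_sqr_lty f_orth.
have := dcontinuous_ae_eq0 Hmetric Hborel Hpos (dcontinuous_distB Hmetric x x') f_ae0 x.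
have [_ d0P _ _] := Hmetric.
by rewrite (proj2 (d0P x x)) // sub0r => /eqP; rewrite oppr_eq0 => /eqP /d0P.
Qed.
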